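(* Let $i\in\{1,2\}$, let $T\ge 1$, $\mathbb{T}=\{0,1,\dots,T-1\}$, and consider the linear time-varying system $\Sigma_{i,\mathbb{T}}$: $x_i(t+1)=A_i(t)x_i(t)+B_i(t)u_i(t)$, $y_i(t)=C_i(t)x_i(t)+D_i(t)u_i(t)$, $t\in\mathbb{T}$, with $u_i(t)\in\mathbb{R}^{n_u}$, $y_i(t)\in\mathbb{R}^{n_y}$, and fixed initial state $x_i(0)=x_{i0}$. Let $\mathcal{B}_{i,x_{i0}}\subseteq\mathbb{R}^{n_wT}$ ($n_w=n_u+n_y$) be its admissible behavior (defined in the context). Then $\mathcal{B}_{i,x_{i0}}$ is an affine set. Moreover, suppose $n_uT+1$ test inputs $\mathbf{u}_i^0,\mathbf{u}_i^1,\dots,\mathbf{u}_i^{n_uT}\in\mathbb{R}^{n_uT}$ are applied, each from the initial state $x_{i0}$, producing outputs $\mathbf{y}_i^k$, and that (1) $\mathbf{u}_i^0=0\in\mathbb{R}^{n_uT}$ and (2) $\operatorname{rank}[\mathbf{u}_i^1,\dots,\mathbf{u}_i^{n_uT}]=n_uT$. Set $w_i^k=\operatorname{col}(\mathbf{u}_i^k,\mathbf{y}_i^k)$ and $W_i=[w_i^1-w_i^0,\,w_i^2-w_i^0,\dots,w_i^{n_uT}-w_i^0]$. Then a vector $\overline{w}=\operatorname{col}(\overline{\mathbf{u}}_i,\overline{\mathbf{y}}_i)\in\mathbb{R}^{n_wT}$ belongs to $\mathcal{B}_{i,x_{i0}}$ if and only if there exists $g_i\in\mathbb{R}^{n_uT}$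 with $\overline{w}=W_ig_i+w_i^0$.
   Context: The state $x_i(t)$ has some finite (unknown) dimension and $A_i(t),B_i(t),C_i(t),D_i(t)$ are real matrices of compatible sizes. For a sequence over $\mathbb{T}$, supervectors are $\mathbf{u}_i=[u_i(0)^{\rm T},\dots,u_i(T-1)^{\rm T}]^{\rm T}\in\mathbb{R}^{n_uT}$, $\mathbf{y}_i=[y_i(0)^{\rm T},\dots,y_i(T-1)^{\rm T}]^{\rm T}\in\mathbb{R}^{n_yT}$, and similarly $\mathbf{x}_i$. The admissible behavior $\mathcal{B}_{i,x_{i0}}$ is the set of all $\operatorname{col}(\mathbf{u}_i,\mathbf{y}_i)\in\mathbb{R}^{n_wT}$ for which there exists a state supervector $\mathbf{x}_i$ with $x_i(0)=x_{i0}$ such that $(\mathbf{u}_i,\mathbf{y}_i,\mathbf{x}_i)$ satisfies the system equations for all $t\in\mathbb{T}$. The output $\mathbf{y}_i^k$ is the output supervector of the system driven by input $\mathbf{u}_i^k$ from $x_i(0)=x_{i0}$. *)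

From HB Require Import structures.
From mathcomp Require Import all_boot all_order all_algebra.
From mathcomp Require Import reals.
Set Implicit Arguments. Unset Strict Implicit. Unset Printing Implicit Defensive.
Import Order.TTheory GRing.Theory Num.Theory.
Local Open Scope ring_scope.

Section LTV.
Variable R : realType.

(* Supervector [s(0); s(1); ...; s(T-1)] of a signal s : nat -> 'cV_n;
   entry t*n + j is (s t) j. *)
Definition supvec (n T : nat) (s : nat -> 'cV[R]_n) : 'cV[R]_(T * n) :=
  (mxvec (\matrix_(t < T, j < n) s t j 0))^T.

Definition sig_of (n T : nat) (v : 'cV[R]_(T * n)) (t : nat) : 'cV[R]_n :=
  match (insub t : option 'I_T) with
  | Some i => \col_(j < n) v (mxvec_index i j) 0
  | None => 0
  end.

Variables (nx nu ny : nat) (T : nat).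
Variables (A : nat -> 'M[R]_nx) (B : nat -> 'M[R]_(nx, nu))
          (C : nat -> 'M[R]_(ny, nx)) (D : nat -> 'M[R]_(ny, nu)).
Variable x0 : 'cV[R]_nx.

Definition behavior (w : 'cV[R]_(T * nu + T * ny)) : Prop :=
  exists (u : nat -> 'cV[R]_nu) (y : nat -> 'cV[R]_ny) (x : nat -> 'cV[R]_nx),
    x 0%N = x0 /\
    (forall t, (t < T)%N ->
       x t.+1 = A t *m x t + B t *m u t /\ y t = C t *m x t + D t *m u t) /\
    w = col_mx (supvec T u) (supvec T y).

Fixpoint state_traj (u : nat -> 'cV[R]_nu) (t : nat) : 'cV[R]_nx :=
  match t with
  | 0 => x0
  | t'.+1 => A t' *m state_traj u t' + B t' *m u t'
  end.

Definition output (uu : 'cV[R]_(T * nu)) : 'cV[R]_(T * ny) :=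
  let u := sig_of uu in
  supvec T (fun t => C t *m state_traj u t + D t *m u t).

End LTV.

Definition affine_set (R : realType) (m : nat) (S : 'cV[R]_m -> Prop) : Prop :=
  forall (w1 w2 : 'cV[R]_m) (a : R), S w1 -> S w2 -> S (a *: w1 + (1 - a) *: w2).
Arguments behavior {R nx nu ny} T A B C D x0 w.
Arguments output {R nx nu ny} T A B C D x0 uu.

From HB Require Import structures.
From mathcomp Require Import all_boot all_order all_algebra.
From mathcomp Require Import reals.
Set Implicit Arguments. Unset Strict Implicit. Unset Printing Implicit Defensive.
Import Order.TTheory GRing.Theory Num.Theory.
Local Open Scope ring_scope.

(* By superposition the output is the zero-input response c = y(x0, 0) plus
   the zero-state response L, which is linear in the input; so the behavior is
   the graph {col(u, c + L u)} of an affine map, hence an affine set.  Since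
   u^0 = 0 we get w^0 = col(0, c) and w^k - w^0 = col(u^k, L u^k).  When the
   test inputs form an invertible matrix U, every input is U g, and linearity
   of L turns col(U g, c + L (U g)) into W g + w^0. *)

Lemma mulmx_sum_col (R : comNzRingType) (m p : nat) (X : 'M[R]_(m, p)) (g : 'cV[R]_p) :
  X *m g = \sum_k g k 0 *: col k X.
Proof.
apply/colP => i; rewrite !mxE summxE; apply: eq_bigr => k _.
by rewrite !mxE mulrC.
Qed.

Section LinearOnColumns.
Variables (R : comNzRingType) (m n p : nat).

Definition map_cols (f : 'cV[R]_m -> 'cV[R]_n) (X : 'M[R]_(m, p)) : 'M[R]_(n, p) :=
  \matrix_(i, k) f (col k X) i 0.

Lemma linear_mulmx (L : {linear 'cV[R]_m -> 'cV[R]_n}) (X : 'M[R]_(m, p)) g :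
  L (X *m g) = map_cols L X *m g.
Proof.
rewrite !mulmx_sum_col linear_sum; apply: eq_bigr => k _.
by rewrite linearZ; congr (_ *: _); apply/colP => i; rewrite !mxE.
Qed.

End LinearOnColumns.

Section AffineGraph.
Variables (R : comUnitRingType) (m n : nat).
Variables (L : {linear 'cV[R]_m -> 'cV[R]_n}) (c : 'cV[R]_n).

Definition affine_graph (w : 'cV[R]_(m + n)) : Prop :=
  exists u, w = col_mx u (c + L u).

Lemma affine_graph_param (U : 'M[R]_m) w : U \in unitmx ->
  affine_graph w <-> exists g, w = col_mx U (map_cols L U) *m g + col_mx 0 c.
Proof.
move=> unitU.
have graphE g : col_mx U (map_cols L U) *m g + col_mx 0 c = col_mx (U *m g) (c + L (U *m g)).
  by rewrite mul_col_mx add_col_mx addr0 linear_mulmx addrC.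
split=> [[u ->]|[g ->]]; last by exists (U *m g); rewrite graphE.
by exists (invmx U *m u); rewrite graphE mulmxA mulmxV // mul1mx.
Qed.

End AffineGraph.

Lemma affine_set_graph (R : realType) (m n : nat)
    (L : {linear 'cV[R]_m -> 'cV[R]_n}) (c : 'cV[R]_n) :
  affine_set (affine_graph L c).
Proof.
move=> _ _ a [u1 ->] [u2 ->]; exists (a *: u1 + (1 - a) *: u2).
rewrite !scale_col_mx add_col_mx linearP linearZ !scalerDr addrACA -scalerDl.
by rewrite [a + _]addrC subrK scale1r.
Qed.

Section Supervectors.
Variables (R : realType) (n T : nat).

Lemma supvecE (s : nat -> 'cV[R]_n) (i : 'I_T) (j : 'I_n) :
  supvec T s (mxvec_index i j) 0 = s i j 0.
Proof. by rewrite /supvec mxE mxvecE mxE. Qed.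

Lemma eq_supvec (s s' : nat -> 'cV[R]_n) :
  (forall t, (t < T)%N -> s t = s' t) -> supvec T s = supvec T s'.
Proof.
move=> eq_s; apply/colP => k.
by case/mxvec_indexP: k => i j; rewrite !supvecE eq_s.
Qed.

Lemma supvec_lincomb (a : R) (s s' : nat -> 'cV[R]_n) :
  supvec T (fun t => a *: s t + s' t) = a *: supvec T s + supvec T s'.
Proof.
apply/colP => k.
by case/mxvec_indexP: k => i j; rewrite !mxE !mxvecE !mxE.
Qed.

Lemma sig_ofE (v : 'cV[R]_(T * n)) (i : 'I_T) :
  sig_of v i = \col_j v (mxvec_index i j) 0.
Proof. by rewrite /sig_of valK. Qed.

Lemma sig_of_linear t : linear (fun v : 'cV[R]_(T * n) => sig_of v t).
Proof.
move=> a v v'; case: (ltnP t T) => [ltT|geT].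
  by rewrite -[t]/(nat_of_ord (Ordinal ltT)) !sig_ofE; apply/colP => j; rewrite !mxE.
by rewrite /sig_of insubN -?leqNgt // scaler0 addr0.
Qed.

Lemma sig_of_supvec (s : nat -> 'cV[R]_n) t :
  (t < T)%N -> sig_of (supvec T s) t = s t.
Proof.
move=> ltT; rewrite -[t]/(nat_of_ord (Ordinal ltT)) sig_ofE.
by apply/colP => j; rewrite mxE supvecE.
Qed.

Lemma supvec_sig_of (v : 'cV[R]_(T * n)) : supvec T (sig_of v) = v.
Proof.
apply/colP => k.
by case/mxvec_indexP: k => i j; rewrite supvecE sig_ofE mxE.
Qed.

End Supervectors.

Section LinearTimeVarying.
Variables (R : realType) (nx nu ny T : nat).
Variables (A : nat -> 'M[R]_nx) (B : nat -> 'M[R]_(nx, nu))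
          (C : nat -> 'M[R]_(ny, nx)) (D : nat -> 'M[R]_(ny, nu)).

Lemma eq_state_traj x0 (u u' : nat -> 'cV[R]_nu) :
  u =1 u' -> state_traj A B x0 u =1 state_traj A B x0 u'.
Proof. by move=> eq_u; elim=> [|t IH] //=; rewrite IH eq_u. Qed.

Lemma state_traj_lincomb (a : R) x0 x0' (u u' : nat -> 'cV[R]_nu) t :
  state_traj A B (a *: x0 + x0') (fun s => a *: u s + u' s) t =
  a *: state_traj A B x0 u t + state_traj A B x0' u' t.
Proof.
elim: t => [|t IH] //=; rewrite IH !mulmxDr -!scalemxAr scalerDr.
by rewrite addrACA.
Qed.

Lemma output_lincomb (a : R) x0 x0' uu uu' :
  output T A B C D (a *: x0 + x0') (a *: uu + uu') =
  a *: output T A B C D x0 uu + output T A B C D x0' uu'.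
Proof.
rewrite /output -supvec_lincomb; apply: eq_supvec => t _.
rewrite (eq_state_traj _ (fun s => sig_of_linear s a uu uu')) sig_of_linear.
by rewrite state_traj_lincomb !mulmxDr -!scalemxAr scalerDr addrACA.
Qed.

Lemma zero_state_output_is_linear : linear (output T A B C D 0).
Proof. by move=> a uu uu'; rewrite -output_lincomb scaler0 addr0. Qed.

HB.instance Definition _ := GRing.isLinear.Build R _ _ _ (output T A B C D 0)
  zero_state_output_is_linear.

Lemma output_superposition x0 uu :
  output T A B C D x0 uu = output T A B C D x0 0 + output T A B C D 0 uu.
Proof. by have := output_lincomb 1 x0 0 0 uu; rewrite !scale1r addr0 add0r. Qed.

Lemma behavior_graph x0 w :
  behavior T A B C D x0 w <-> affine_graph (output T A B C D 0) (output T A B C D x0 0) w.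
Proof.
split=> [[u [y [x [x00 [sys ->]]]]]|[uu ->]]; last first.
  exists (sig_of uu), (fun t => C t *m state_traj A B x0 (sig_of uu) t + D t *m sig_of uu t).
  exists (state_traj A B x0 (sig_of uu)).
  by rewrite supvec_sig_of -output_superposition.
have traj s : (s <= T)%N -> x s = state_traj A B x0 (sig_of (supvec T u)) s.
  elim: s => [_|s IH ltT]; first exact: x00.
  rewrite /= sig_of_supvec // -IH ?(ltnW ltT) //.
  by case: (sys s ltT) => ->.
exists (supvec T u); rewrite -output_superposition /output; congr col_mx.
apply: eq_supvec => t ltT; rewrite sig_of_supvec // -traj ?(ltnW ltT) //.
by case: (sys t ltT).
Qed.

End LinearTimeVarying.

Theorem lemma1 (R : realType) (nx nu ny T : nat) (hT : (1 <= T)%N)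
  (A : nat -> 'M[R]_nx) (B : nat -> 'M[R]_(nx, nu))
  (C : nat -> 'M[R]_(ny, nx)) (D : nat -> 'M[R]_(ny, nu))
  (x0 : 'cV[R]_nx) :
  affine_set (behavior T A B C D x0) /\
  forall (us : nat -> 'cV[R]_(T * nu)),
    us 0%N = 0 ->
    \rank (\matrix_(i < T * nu, k < T * nu) us k.+1 i 0) = (T * nu)%N ->
    let w := fun k => col_mx (us k) (output T A B C D x0 (us k)) in
    let W := \matrix_(i < T * nu + T * ny, k < T * nu) (w k.+1 - w 0%N) i 0 in
    forall wbar : 'cV[R]_(T * nu + T * ny),
      behavior T A B C D x0 wbar <-> exists g : 'cV[R]_(T * nu), wbar = W *m g + w 0%N.
Proof.
split=> [w1 w2 a /behavior_graph B1 /behavior_graph B2|us us0 rankU w W wbar].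
  by apply/behavior_graph; apply: affine_set_graph.
set U := \matrix_(i < T * nu, k < T * nu) us k.+1 i 0.
have unitU : U \in unitmx by rewrite -row_free_unit /row_free rankU.
have w0E : w 0%N = col_mx 0 (output T A B C D x0 0) by rewrite /w us0.
have WE : W = col_mx U (map_cols (output T A B C D 0) U).
  have colU k : col k U = us k.+1 by apply/colP => i; rewrite !mxE.
  apply/matrixP => i k; rewrite mxE w0E /w opp_col_mx add_col_mx subr0.
  rewrite output_superposition addrC addKr -colU.
  by rewrite -[i]splitK; case: (split i) => j; rewrite ?col_mxEu ?col_mxEd !mxE.
by rewrite behavior_graph w0E WE; apply: affine_graph_param.
Qed.
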